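(* Let $q$ be a prime power, let $1 \le k \le n-1$, and let $S \subseteq \mathcal{L}_{n,k}$ be nonempty. Then \[ \Phi_{J_q(n,k)}(S) \le \frac{[n-k+1]_q}{q[n-k]_q}\left(1 - \frac{\mu_k(S)}{\mu_{k-1}(\partial S)}\right). \]
   Context: $\mathbb{F}_q$ is the finite field with $q$ elements; $\mathcal{L}_{n,k}$ is the set of $k$-dimensional linear subspaces of $(\mathbb{F}_q)^n$, and for $T \subseteq \mathcal{L}_{n,j}$, $\mu_j(T) = |T|/|\mathcal{L}_{n,j}|$. The shadow of $S \subseteq \mathcal{L}_{n,k}$ is $\partial S = \{B \in \mathcal{L}_{n,k-1} : \exists A \in S,\ B \subset A\}$. For real $x$, $[x]_q = \frac{q^x-1}{q-1}$. The Grassmann graph $J_q(n,k)$ has vertex set $\mathcal{L}_{n,k}$, with $A_1, A_2$ adjacent iff $\dim(A_1\cap A_2) = k-1$; it is $d$-regular with $d = q[k]_q[n-k]_q$. For a $d$-regular graph $G=(V,E)$ and nonempty $S \subseteq V$, $\Phi_G(S) = \frac{|E(S,\bar S)|}{d|S|}$, where $E(S,\bar S)$ is the set of edges between $S$ and $\bar S = V\setminus S$. *)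

(* Subspaces of F^n are represented canonically by square
   matrices A : 'M[F]_n with <<A>>%MS = A (row space representation). *)
From HB Require Import structures.
From mathcomp Require Import all_boot all_order all_algebra all_field.
Set Implicit Arguments. Unset Strict Implicit. Unset Printing Implicit Defensive.
Import Order.TTheory GRing.Theory Num.Theory.
Local Open Scope ring_scope.

Section Grassmann.
Variables (F : finFieldType) (n : nat).

Definition Lsub (k : nat) : {set 'M[F]_n} :=
  [set A : 'M[F]_n | (<<A>>%MS == A) && (\rank A == k)%N].

Definition shadow (k : nat) (S : {set 'M[F]_n}) : {set 'M[F]_n} :=
  [set B in Lsub k.-1 | [exists A in S, (B <= A)%MS]].

Definition mu (j : nat) (T : {set 'M[F]_n}) : rat :=
  (#|T|)%:R / (#|Lsub j|)%:R.

Definition gadj (k : nat) (A1 A2 : 'M[F]_n) : bool :=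
  (\rank (A1 :&: A2)%MS == k.-1)%N.

Definition cut_edges (k : nat) (S : {set 'M[F]_n}) : {set 'M[F]_n * 'M[F]_n} :=
  [set p | [&& p.1 \in S, p.2 \in Lsub k :\: S & gadj k p.1 p.2]].

End Grassmann.

Definition qint (q m : nat) : rat := ((q%:R ^+ m - 1) / (q%:R - 1)).

Definition gdeg (F : finFieldType) (n k : nat) : rat :=
  (#|F|)%:R * qint #|F| k * qint #|F| (n - k).

Definition Phi (F : finFieldType) (n k : nat) (S : {set 'M[F]_n}) : rat :=
  (#|cut_edges k S|)%:R / (gdeg F n k * (#|S|)%:R).

(* For a (k-1)-space C of the shadow D let d(C) be the number of members of
   S above C. A cut edge (A, B) meets in some C of D, with A in S and B outside
   S both above C; as every (k-1)-space lies in N = [n-k+1]_q spaces of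
   dimension k, |E(S, S^c)| <= sum_C d(C) (N - d(C)). By duality every k-space
   has K = [k]_q hyperplanes, so sum_C d(C) = K |S|, and Cauchy-Schwarz gives
   sum_C d(C)^2 >= (K |S|)^2 / |D|. Counting flags, |L_{k-1}| N = |L_k| K,
   which turns this bound into the stated one. *)

From HB Require Import structures.
From mathcomp Require Import all_boot all_order all_algebra all_field.
From mathcomp Require Import mxabelem zify ring lra.
Set Implicit Arguments. Unset Strict Implicit.
Import Order.TTheory GRing.Theory Num.Theory.
Local Open Scope ring_scope.

Lemma double_counting (T U : finType) (A : {set T}) (B : {set U}) (R : T -> U -> bool) :
  \sum_(a in A) #|[set b in B | R a b]| = \sum_(b in B) #|[set a in A | R a b]|.
Proof.
under eq_bigr do rewrite -sum1dep_card.
under [RHS]eq_bigr do rewrite -sum1dep_card.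
rewrite (exchange_big_dep (mem B)) => [|a b _ /andP[] //].
by apply: eq_bigr => b Bb; apply: eq_bigl => a; rewrite (Bb : b \in B).
Qed.

Lemma sqr_sum_le_card_mul_sum_sqr (R : realDomainType) (T : finType) (D : {set T})
    (f : T -> R) :
  (\sum_(i in D) f i) ^+ 2 <= #|D|%:R * \sum_(i in D) f i ^+ 2.
Proof.
set s := \sum_(i in D) f i; set s2 := \sum_(i in D) f i ^+ 2.
have row_sum i : \sum_(j in D) (f i - f j) ^+ 2 = f i ^+ 2 *+ #|D| - (f i * s) *+ 2 + s2.
  under eq_bigr do rewrite sqrrB.
  by rewrite !big_split /= sumrN sumrMnl sumr_const -mulr_sumr.
have : 0 <= \sum_(i in D) \sum_(j in D) (f i - f j) ^+ 2.
  by do 2![apply: sumr_ge0 => ? _]; apply: sqr_ge0.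
under eq_bigr do rewrite row_sum.
rewrite !big_split /= sumrN !sumrMnl sumr_const -mulr_suml -/s -/s2.
by rewrite -mulr_natl mulrC expr2; lra.
Qed.

Lemma qint_gt0 (q m : nat) : (1 < q)%N -> (0 < m)%N -> 0 < qint q m.
Proof.
move=> q_gt1 m_gt0; rewrite /qint divr_gt0 // subr_gt0 ?ltr1n //.
by rewrite -natrX ltr1n -(expn0 q) ltn_exp2l.
Qed.

Lemma natr_eq_qint (q x j m : nat) : (1 < q)%N ->
  (x * (q ^ j.+1 - q ^ j) = q ^ (j + m) - q ^ j)%N -> x%:R = qint q m.
Proof.
move=> q_gt1 eq_x; have q_gt0 : (0 < q)%N by apply: ltnW.
have qj_gt0 : (0 < q ^ j)%N by rewrite expn_gt0 q_gt0.
have eq_x1 : (x * (q - 1) = q ^ m - 1)%N.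
  apply/eqP; rewrite -(eqn_pmul2l qj_gt0) mulnCA !mulnBr !muln1.
  by rewrite -expnSr -expnD -mulnBr eq_x.
have q1_neq0 : q%:R - 1 != 0 :> rat by rewrite subr_eq0 pnatr_eq1 gtn_eqF.
apply: (mulIf q1_neq0); rewrite divfK //.
move/(congr1 (GRing.natmul (1 : rat))): eq_x1.
by rewrite natrM !natrB ?expn_gt0 ?q_gt0 // natrX.
Qed.

Section Subspaces.
Variables (F : finFieldType) (n : nat).
Local Notation q := #|F|.

Definition supspaces k (C : 'M[F]_n) := [set B in Lsub F n k | (C <= B)%MS].
Definition subspaces k (A : 'M[F]_n) := [set C in Lsub F n k | (C <= A)%MS].

Lemma mxrank_adds_notin (C : 'M[F]_n) (v : 'rV[F]_n) :
  ~~ (v <= C)%MS -> \rank (C + v)%MS = (\rank C).+1.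
Proof.
move=> vNC; apply/eqP; rewrite eqn_leq; apply/andP; split.
  apply: leq_trans (mxrank_adds_leqif _ _) _.
  by rewrite -[(\rank C).+1]addn1 leq_add2l rank_leq_row.
have ltCv : (C < C + v)%MS.
  by rewrite ltmxE addsmxSl; apply: contra vNC; apply: submx_trans (addsmxSr _ _).
by move: ltCv; rewrite ltmxErank => /andP[].
Qed.

Lemma supspaces_succ_row (C : 'M[F]_n) (v : 'rV[F]_n) : ~~ (v <= C)%MS ->
  [set B in supspaces (\rank C).+1 C | (v <= B)%MS] = [set <<(C + v)%MS>>%MS].
Proof.
move=> vNC; have rCv := mxrank_adds_notin vNC.
apply/setP => B; rewrite !inE; apply/idP/eqP => [|->].
  case/andP => /andP[/andP[/eqP gB /eqP rB] CB] vB.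
  have CvB : (C + v <= B)%MS by rewrite addsmx_sub CB.
  have [_] := mxrank_leqif_sup CvB; rewrite rCv rB eqxx => /esym BCv.
  by rewrite -gB; apply/genmxP; rewrite BCv CvB.
by rewrite genmx_id eqxx mxrank_gen rCv eqxx !genmxE addsmxSl addsmxSr.
Qed.

(* Count the pairs (v, B) with v in B but not in C: each B contains
   q^(r+1) - q^r such v (r = \rank C), and each v outside C lies in exactly
   one B, namely C + v. *)
Lemma card_supspaces_succ_mul (C : 'M[F]_n) : (\rank C < n)%N ->
  (#|supspaces (\rank C).+1 C| * (q ^ (\rank C).+1 - q ^ \rank C)
     = q ^ n - q ^ \rank C)%N.
Proof.
move=> ltCn; set X := supspaces _ C; set V := ~: rowg C.
have cardV : #|V| = (q ^ n - q ^ \rank C)%N.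
  by rewrite cardsCs setCK card_rowg card_mx mul1n.
have outside_C B : B \in X ->
    #|[set v in V | (v <= B)%MS]| = (q ^ (\rank C).+1 - q ^ \rank C)%N.
  rewrite !inE => /andP[/andP[_ /eqP rB] CB].
  have -> : [set v in V | (v <= B)%MS] = rowg B :\: rowg C.
    by apply/setP => v; rewrite !inE andbC.
  rewrite cardsD card_rowg rB -rowgI card_rowg; congr (_ - _ ^ _)%N.
  by apply/eqmx_rank; rewrite capmxSr sub_capmx CB submx_refl.
rewrite -cardV -sum_nat_const -(eq_bigr _ outside_C) double_counting.
rewrite -sum1_card; apply: eq_bigr => v; rewrite !inE => /supspaces_succ_row ->.
by rewrite cards1.
Qed.

Lemma card_supspaces j (C : 'M[F]_n) : \rank C = j -> (j < n)%N ->
  #|supspaces j.+1 C|%:R = qint q (n - j).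
Proof.
move=> <- ltCn; apply: (natr_eq_qint (j := \rank C)) (card_finNzRing_gt1 F) _.
by rewrite card_supspaces_succ_mul // subnKC // ltnW.
Qed.

(* Taken in canonical form, so that perp maps Lsub j to Lsub (n - j). *)
Definition perp (C : 'M[F]_n) : 'M[F]_n := <<kermx C^T>>%MS.

Lemma mxrank_perp C : \rank (perp C) = (n - \rank C)%N.
Proof. by rewrite mxrank_gen mxrank_ker mxrank_tr. Qed.

Lemma sub_perp m (D : 'M[F]_(m, n)) C : (D <= perp C)%MS = (D *m C^T == 0).
Proof. by rewrite genmxE sub_kermx. Qed.

Lemma perpS C D : (C <= D)%MS -> (perp D <= perp C)%MS.
Proof.
case/submxP => X ->; rewrite sub_perp trmx_mul mulmxA.
by move: (submx_refl (perp D)); rewrite sub_perp => /eqP ->; rewrite mul0mx.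
Qed.

Lemma perpK C : (perp (perp C) == C)%MS.
Proof.
have sub_C : (C <= perp (perp C))%MS.
  rewrite sub_perp; have /eqP/(congr1 trmx) : perp C *m C^T == 0 by rewrite -sub_perp.
  by rewrite trmx_mul trmxK trmx0 => ->.
apply/andP; split => //; have [_ <-] := mxrank_leqif_sup sub_C.
by rewrite !mxrank_perp subKn ?rank_leq_col.
Qed.

Lemma perpK_gen C : <<C>>%MS = C -> perp (perp C) = C.
Proof. by move=> gC; rewrite -[LHS]genmx_id -[RHS]gC; apply/genmxP/perpK. Qed.

Lemma card_subspaces_perp (A : 'M[F]_n) : (0 < \rank A)%N ->
  #|subspaces (\rank A).-1 A| = #|supspaces (n - \rank A).+1 (perp A)|.
Proof.
move=> rA_gt0; have rA_le := rank_leq_col A.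
have perp_inj : {in subspaces (\rank A).-1 A &, injective perp}.
  move=> C1 C2; rewrite !inE => /andP[/andP[/eqP g1 _] _] /andP[/andP[/eqP g2 _] _].
  by move=> eq12; rewrite -(perpK_gen g1) -(perpK_gen g2) eq12.
rewrite -(card_in_imset perp_inj); apply: eq_card => D; apply/imsetP/idP.
  case=> C; rewrite !inE => /andP[/andP[_ /eqP rC] CA] ->.
  rewrite genmx_id eqxx mxrank_perp rC perpS // andbT /=.
  by apply/eqP; lia.
rewrite !inE => /andP[/andP[/eqP gD /eqP rD] AD].
exists (perp D); last by rewrite perpK_gen.
rewrite !inE genmx_id eqxx mxrank_perp rD /=; apply/andP; split.
  by apply/eqP; lia.
by apply: submx_trans (perpS AD) _; case/andP: (perpK A).
Qed.

Lemma card_subspaces k (A : 'M[F]_n) : \rank A = k -> (0 < k)%N ->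
  #|subspaces k.-1 A|%:R = qint q k.
Proof.
move=> <- rA_gt0; have rA_le := rank_leq_col A.
rewrite card_subspaces_perp // (@card_supspaces _ (perp A)) ?mxrank_perp ?subKn //.
lia.
Qed.

(* Double counting of the flags C < A with dim C = k - 1 and dim A = k. *)
Lemma card_Lsub_pred_mul k : (0 < k <= n)%N ->
  #|Lsub F n k.-1|%:R * qint q (n - k.-1) = #|Lsub F n k|%:R * qint q k.
Proof.
case/andP=> k_gt0 k_le_n.
have := double_counting (Lsub F n k.-1) (Lsub F n k) (fun C A => C <= A)%MS.
move/(congr1 (GRing.natmul (1 : rat))); rewrite !natr_sum.
rewrite (eq_bigr (fun=> qint q (n - k.-1))) => [|C]; last first.
  rewrite inE => /andP[_ /eqP rC].
  by have := card_supspaces rC; rewrite prednK // => -> //; lia.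
rewrite [RHS](eq_bigr (fun=> qint q k)) => [|A]; last first.
  by rewrite inE => /andP[_ /eqP rA]; rewrite card_subspaces.
by rewrite !sumr_const !mulr_natl.
Qed.

End Subspaces.

Section CutEdges.
Variables (F : finFieldType) (n k : nat) (S : {set 'M[F]_n}).
Hypotheses (k_gt0 : (0 < k)%N) (k_le_n : (k <= n)%N) (S_Lk : S \subset Lsub F n k).
Local Notation q := #|F|.
Local Notation T := (#|S|%:R * qint q k : rat).

Definition deg_above (C : 'M[F]_n) := #|supspaces k C :&: S|.

(* Classify a cut edge (A, B) by C = A :&: B, which lies in the shadow;
   then A is above C in S and B is above C outside S. *)
Lemma card_cut_edges_le : (#|cut_edges k S| <=
  \sum_(C in shadow k S) deg_above C * (#|supspaces k C| - deg_above C))%N.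
Proof.
pose meet (p : 'M[F]_n * 'M[F]_n) := <<(p.1 :&: p.2)%MS>>%MS.
rewrite -sum1_card (partition_big meet (mem (shadow k S))) /=; last first.
  case=> A B; rewrite !inE /= => /and3P[AS _ /eqP rAB].
  rewrite genmx_id eqxx mxrank_gen rAB eqxx /=.
  by apply/existsP; exists A; rewrite AS genmxE capmxSl.
apply: leq_sum => C _; rewrite sum1dep_card /deg_above -cardsD -cardsX.
apply/subset_leq_card/subsetP => -[A B]; rewrite !inE /= => /andP[].
case/and3P=> AS /andP[BNS BL] _ /eqP <-.
have /(subsetP S_Lk) AL := AS; rewrite !inE in AL.
by rewrite AS BNS AL BL /meet !genmxE capmxSl capmxSr.
Qed.

Lemma sum_deg_above :
  \sum_(C in shadow k S) deg_above C = \sum_(A in S) #|subspaces k.-1 A|.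
Proof.
have -> : \sum_(C in shadow k S) deg_above C
          = \sum_(C in shadow k S) #|[set A in S | (C <= A)%MS]|.
  apply: eq_bigr => C _; apply: eq_card => A; rewrite !inE.
  case AS: (A \in S); rewrite ?andbF //=.
  by have := subsetP S_Lk A AS; rewrite inE andbT => ->.
rewrite double_counting; apply: eq_bigr => A AS; apply: eq_card => C.
rewrite !inE; case CA: (C <= A)%MS; rewrite ?andbF ?andbT //.
have -> : [exists A' in S, (C <= A')%MS] by apply/existsP; exists A; rewrite AS CA.
by rewrite andbT.
Qed.

Lemma sum_deg_above_qint :
  \sum_(C in shadow k S) (deg_above C)%:R = T.
Proof.
rewrite -natr_sum sum_deg_above natr_sum (eq_bigr (fun=> qint q k)) => [|A AS].
  by rewrite sumr_const mulr_natl.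
by have := subsetP S_Lk A AS; rewrite inE => /andP[_ /eqP rA]; rewrite card_subspaces.
Qed.

Lemma card_shadow_gt0 : S != set0 -> (0 < #|shadow k S|)%N.
Proof.
move=> S_neq0; rewrite card_gt0; apply/negP => /eqP D0.
have := sum_deg_above_qint; rewrite D0 big_set0 => /esym/eqP.
rewrite mulf_eq0 pnatr_eq0 cards_eq0 (negPf S_neq0).
by rewrite gt_eqF ?qint_gt0 ?card_finNzRing_gt1.
Qed.

Lemma card_cut_edges_le_sum_sqr :
  #|cut_edges k S|%:R <= qint q (n - k.-1) * T
                         - \sum_(C in shadow k S) (deg_above C)%:R ^+ 2 :> rat.
Proof.
rewrite -sum_deg_above_qint mulr_sumr -sumrB.
apply: le_trans (_ : _ <= (\sum_(C in shadow k S)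
                 deg_above C * (#|supspaces k C| - deg_above C))%:R) _.
  by rewrite ler_nat card_cut_edges_le.
rewrite natr_sum le_eqVlt; apply/orP; left; apply/eqP; apply: eq_bigr => C.
rewrite !inE => /andP[/andP[_ /eqP rC] _].
rewrite natrM natrB ?subset_leq_card ?subsetIl //.
rewrite -(card_supspaces rC); last by lia.
by rewrite prednK // mulrBr mulrC expr2.
Qed.

(* Cauchy-Schwarz turns the sum of squares into the square of the sum. *)
Lemma card_cut_edges_le_shadow : S != set0 ->
  #|cut_edges k S|%:R <= qint q (n - k.-1) * T - T ^+ 2 / #|shadow k S|%:R :> rat.
Proof.
move=> S_neq0; apply: le_trans card_cut_edges_le_sum_sqr _.
rewrite lerD2l lerN2 ler_pdivrMr ?ltr0n ?card_shadow_gt0 // -sum_deg_above_qint mulrC.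
exact: sqr_sum_le_card_mul_sum_sqr.
Qed.

End CutEdges.

Theorem lemma4 (F : finFieldType) (n k : nat) (S : {set 'M[F]_n}) :
  (1 <= k)%N -> (k <= n.-1)%N ->
  S \subset @Lsub F n k -> S != set0 ->
  @Phi F n k S <= qint #|F| (n - k + 1) / ((#|F|)%:R * qint #|F| (n - k))
           * (1 - mu k S / mu k.-1 (shadow k S)).
Proof.
move=> k_gt0 k_le S_Lk S_neq0; have k_le_n : (k <= n)%N by lia.
have q_gt1 : (1 < #|F|)%N := card_finNzRing_gt1 F.
set q := #|F|; set D := shadow k S.
set N := qint q (n - k + 1); set K := qint q k; set Q := qint q (n - k).
have N_eq : N = qint q (n - k.-1) by congr qint; lia.
have K_gt0 : 0 < K by apply: qint_gt0.
have N_gt0 : 0 < N by apply: qint_gt0; lia.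
have Q_gt0 : 0 < Q by apply: qint_gt0; lia.
have q_gt0 : 0 < q%:R :> rat by rewrite ltr0n ltnW.
have S_gt0 : 0 < #|S|%:R :> rat by rewrite ltr0n card_gt0.
have D_gt0 : 0 < #|D|%:R :> rat by rewrite ltr0n card_shadow_gt0.
have Lk_gt0 : 0 < #|Lsub F n k|%:R :> rat.
  by apply: lt_le_trans S_gt0 _; rewrite ler_nat subset_leq_card.
have Lk1_eq : #|Lsub F n k.-1|%:R = #|Lsub F n k|%:R * K / N.
  by rewrite -card_Lsub_pred_mul ?k_gt0 -?N_eq ?mulfK ?gt_eqF.
rewrite /Phi /gdeg /mu -/q -/K -/Q Lk1_eq -/D.
set T := #|S|%:R * K.
have -> : N / (q%:R * Q) *
      (1 - #|S|%:R / #|Lsub F n k|%:R / (#|D|%:R / (#|Lsub F n k|%:R * K / N)))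
    = (N * T - T ^+ 2 / #|D|%:R) / (q%:R * K * Q * #|S|%:R).
  by rewrite /T; field; rewrite !gt_eqF.
have den_gt0 : 0 < q%:R * K * Q * #|S|%:R.
  by apply: mulr_gt0 => //; apply: mulr_gt0 => //; apply: mulr_gt0.
rewrite ler_pM2r ?invr_gt0 // N_eq.
exact: card_cut_edges_le_shadow.
Qed.
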